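(* Let $k\ge 2$ be an integer and let $K:[0,1]^2\to(0,\infty)$ be continuous. Let $W$ be the linear operator on $C[0,1]$, $(Wf)(t)=\int_0^1K(t,u)f(u)\,du$, let $R_k:C_0^+[0,1]\to C_0^+[0,1]$ be $(R_kf)(t)=\left[\frac{(Wf)(t)}{(Wf)(0)}\right]^k$, and let $H_k$ be the Hammerstein operator $(H_kf)(t)=\int_0^1K(t,u)f^k(u)\,du$ on $C^+[0,1]$. Then the equation $R_kf=f$ has a solution $f\in C_0^+[0,1]$ if and only if there exist $\lambda>0$ and a nonzero $f\in C^+[0,1]$ with $H_kf=\lambda f$.
   Context: $C^+[0,1]=\{f\in C[0,1]: f(x)\ge 0 \text{ for all } x\}$ and $C_0^+[0,1]=C^+[0,1]\setminus\{0\}$ (the identically zero function removed). *)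

From Stdlib Require Import Reals Lra ClassicalEpsilon.
Open Scope R_scope.

Definition cont01 (f : R -> R) : Prop :=
  forall x, 0 <= x <= 1 -> forall eps, 0 < eps ->
    exists delta, 0 < delta /\
      forall y, 0 <= y <= 1 -> Rabs (y - x) < delta -> Rabs (f y - f x) < eps.

Definition cont01sq (K : R -> R -> R) : Prop :=
  forall x y, 0 <= x <= 1 -> 0 <= y <= 1 -> forall eps, 0 < eps ->
    exists delta, 0 < delta /\
      forall x' y', 0 <= x' <= 1 -> 0 <= y' <= 1 ->
        Rabs (x' - x) < delta -> Rabs (y' - y) < delta ->
        Rabs (K x' y' - K x y) < eps.

Definition Cplus (f : R -> R) : Prop :=
  cont01 f /\ forall x, 0 <= x <= 1 -> 0 <= f x.

Definition C0plus (f : R -> R) : Prop :=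
  Cplus f /\ exists x, 0 <= x <= 1 /\ f x <> 0.

(* Riemann integral over [0,1] (the value of RiemannInt when g is
   integrable; an arbitrary real otherwise -- only used on integrable g). *)
Definition Int01 (g : R -> R) : R :=
  epsilon (inhabits 0)
    (fun v => exists pr : Riemann_integrable g 0 1, RiemannInt pr = v).

Definition Wop (K : R -> R -> R) (f : R -> R) (t : R) : R :=
  Int01 (fun u => K t u * f u).

Definition Rop (k : nat) (K : R -> R -> R) (f : R -> R) (t : R) : R :=
  (Wop K f t / Wop K f 0) ^ k.

Definition Hop (k : nat) (K : R -> R -> R) (f : R -> R) (t : R) : R :=
  Int01 (fun u => K t u * f u ^ k).

From Stdlib Require Import Reals Lra ClassicalEpsilon.
From Coquelicot Require Import Coquelicot.
Open Scope R_scope.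

(* Two
   identities carry the whole argument:
   - H_k f = W (f^k), literally by the definitions;
   - W is linear, so if g = c * f on [0,1] then W g = c * W f, and R_k only
     sees W g up to a nonzero factor: if W g = c * phi then R_k g = (phi/phi(0))^k.
   Because K > 0, W maps C_0^+ into strictly positive continuous functions.
   (=>) If R_k f = f, put h = W f and c = h(0) > 0.  Then h^k = c^k f on [0,1],
        so H_k h = W (h^k) = c^k W f = c^k h: h is an eigenfunction.
   (<=) If H_k f = lam f, then lam f(0) = W (f^k)(0) > 0, so f(0) > 0; for
        g = (f/f(0))^k we get W g = f(0)^-k lam f, hence R_k g = (f/f(0))^k = g.  The argument works for every
   exponent k. *)

(* Projection of the real line onto [0,1]; it extends functions on [0,1]. *)
Definition clamp (x : R) : R := Rmax 0 (Rmin 1 x).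

Lemma clamp_in x : 0 <= clamp x <= 1.
Proof. unfold clamp, Rmax, Rmin; repeat destruct Rle_dec; lra. Qed.

Lemma clamp_id x : 0 <= x <= 1 -> clamp x = x.
Proof. intros; unfold clamp, Rmax, Rmin; repeat destruct Rle_dec; lra. Qed.

Lemma clamp_lip x y : Rabs (clamp y - clamp x) <= Rabs (y - x).
Proof.
  unfold clamp, Rmax, Rmin; repeat destruct Rle_dec;
  unfold Rabs; repeat destruct Rcase_abs; lra.
Qed.

Lemma cont01_clamp_pt f : cont01 f -> forall x, continuity_pt (fun y => f (clamp y)) x.
Proof.
  intros Hf x eps Heps.
  destruct (Hf (clamp x) (clamp_in x) eps Heps) as [d [Hd H]].
  exists d; split; auto.
  intros y [_ Hy]; simpl in *; unfold R_dist in *.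
  apply H; [apply clamp_in|].
  eapply Rle_lt_trans; [apply clamp_lip|exact Hy].
Qed.

Lemma cont01_clamp f : cont01 f -> forall x, continuous (fun y => f (clamp y)) x.
Proof. intros Hf x; apply continuity_pt_filterlim, cont01_clamp_pt; auto. Qed.

Lemma clamp_pt_cont01 f :
  (forall x, 0 <= x <= 1 -> continuity_pt (fun y => f (clamp y)) x) -> cont01 f.
Proof.
  intros Hf x Hx eps Heps.
  destruct (Hf x Hx eps Heps) as [d [Hd H]].
  exists d; split; auto.
  intros y Hy Hyx.
  destruct (Req_dec x y) as [<-|Hne].
  - rewrite Rminus_diag, Rabs_R0; lra.
  - specialize (H y); simpl in H; unfold R_dist in H.
    rewrite !clamp_id in H by lra.
    apply H; unfold D_x, no_cond; tauto.
Qed.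

Lemma cont01_ext f g : (forall x, 0 <= x <= 1 -> f x = g x) -> cont01 f -> cont01 g.
Proof.
  intros E Hf x Hx eps He.
  destruct (Hf x Hx eps He) as [d [Hd H]].
  exists d; split; auto.
  intros y Hy Hyx; rewrite <- !E by auto; auto.
Qed.

Lemma cont01_const c : cont01 (fun _ => c).
Proof.
  intros x _ eps H; exists 1; split; [lra|].
  intros; rewrite Rminus_diag, Rabs_R0; lra.
Qed.

Lemma cont01_mult f g : cont01 f -> cont01 g -> cont01 (fun x => f x * g x).
Proof.
  intros Hf Hg; apply clamp_pt_cont01; intros x _.
  apply (continuity_pt_mult (fun y => f (clamp y)) (fun y => g (clamp y)));
    apply cont01_clamp_pt; auto.
Qed.

Lemma cont01_pow f n : cont01 f -> cont01 (fun x => f x ^ n).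
Proof.
  intros Hf; induction n; simpl.
  - apply cont01_const.
  - apply cont01_mult; auto.
Qed.

Lemma cont01_section K t : cont01sq K -> 0 <= t <= 1 -> cont01 (fun u => K t u).
Proof.
  intros HK Ht x Hx eps He.
  destruct (HK t x Ht Hx eps He) as [d [Hd H]].
  exists d; split; auto.
  intros y Hy Hyx; apply H; auto.
  rewrite Rminus_diag, Rabs_R0; lra.
Qed.

Lemma cont01_ex_RInt f : cont01 f -> ex_RInt f 0 1.
Proof.
  intros Hf.
  apply ex_RInt_ext with (fun y => f (clamp y)).
  - intros x Hx; rewrite Rmin_left, Rmax_right in Hx by lra.
    rewrite clamp_id; lra.
  - apply (@ex_RInt_continuous R_CompleteNormedModule).
    intros; apply cont01_clamp; auto.
Qed.

Lemma Int01_RInt f : ex_RInt f 0 1 -> Int01 f = RInt f 0 1.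
Proof.
  intros H; unfold Int01.
  destruct (epsilon_spec (inhabits 0)
    (fun v => exists pr : Riemann_integrable f 0 1, RiemannInt pr = v)) as [pr Hpr].
  - exists (RiemannInt (ex_RInt_Reals_0 _ _ _ H)), (ex_RInt_Reals_0 _ _ _ H).
    reflexivity.
  - rewrite <- Hpr; symmetry; apply RInt_Reals.
Qed.

(* A continuous nonnegative function, positive at one point of [0,1], has a
   positive integral: it stays above half that value on a nondegenerate
   subinterval around the point. *)
Lemma RInt_pos01 h x0 : cont01 h -> (forall x, 0 <= x <= 1 -> 0 <= h x) ->
  0 <= x0 <= 1 -> 0 < h x0 -> 0 < RInt h 0 1.
Proof.
  intros Hc Hn Hx0 Hp.
  set (g := fun y => h (clamp y)).
  assert (Hgh : RInt h 0 1 = RInt g 0 1).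
  { apply RInt_ext; intros x Hx; rewrite Rmin_left, Rmax_right in Hx by lra.
    unfold g; rewrite clamp_id; lra. }
  assert (Hgi : forall a b, ex_RInt g a b).
  { intros; apply (@ex_RInt_continuous R_CompleteNormedModule).
    intros; apply cont01_clamp; auto. }
  assert (Hgn : forall x, 0 <= g x) by (intros; apply Hn, clamp_in).
  destruct (Hc x0 Hx0 (h x0 / 2)) as [d [Hd Hnear]]; [lra|].
  set (a := Rmax 0 (x0 - d/2)); set (b := Rmin 1 (x0 + d/2)).
  assert (Ha : 0 <= a <= x0 /\ x0 - d/2 <= a)
    by (unfold a, Rmax; destruct Rle_dec; lra).
  assert (Hb : x0 <= b <= 1 /\ b <= x0 + d/2)
    by (unfold b, Rmin; destruct Rle_dec; lra).
  assert (Hab : a < b) by (unfold a, b, Rmax, Rmin; repeat destruct Rle_dec; lra).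
  rewrite Hgh, <- (RInt_Chasles g 0 a 1), <- (RInt_Chasles g a b 1) by auto.
  change plus with Rplus.
  assert (0 <= RInt g 0 a) by (apply RInt_ge_0; auto; lra).
  assert (0 <= RInt g b 1) by (apply RInt_ge_0; auto; lra).
  assert (0 < RInt g a b).
  { apply RInt_gt_0; auto.
    - intros x Hx; unfold g; rewrite clamp_id by lra.
      assert (Rabs (h x - h x0) < h x0 / 2)
        by (apply Hnear; [lra|unfold Rabs; destruct Rcase_abs; lra]).
      unfold Rabs in *; destruct Rcase_abs; lra.
    - intros; apply cont01_clamp; auto. }
  lra.
Qed.

Lemma C0plus_pos_point f : C0plus f -> exists x, 0 <= x <= 1 /\ 0 < f x.
Proof.
  intros [[_ Hn] [x [Hx Hfx]]]; exists x; split; auto.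
  destruct (Hn x Hx); auto; congruence.
Qed.

Lemma C0plus_pow f n : C0plus f -> C0plus (fun u => f u ^ n).
Proof.
  intros Hf; destruct (C0plus_pos_point f Hf) as [x [Hx Hfx]].
  destruct Hf as [[Hc Hn] _]; split; [split|].
  - apply cont01_pow; auto.
  - intros; apply pow_le, Hn; auto.
  - exists x; split; auto; apply pow_nonzero; lra.
Qed.

Lemma C0plus_div f c : 0 < c -> C0plus f -> C0plus (fun u => f u / c).
Proof.
  intros Hc Hf; destruct (C0plus_pos_point f Hf) as [x [Hx Hfx]].
  destruct Hf as [[Hfc Hn] _]; split; [split|].
  - apply cont01_mult; [auto|apply cont01_const].
  - intros; apply Rdiv_le_0_compat; auto.
  - exists x; split; auto; apply Rgt_not_eq, Rdiv_lt_0_compat; auto.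
Qed.

Lemma Hop_Wop k K f t : Hop k K f t = Wop K (fun u => f u ^ k) t.
Proof. reflexivity. Qed.

Lemma Rop_of_scaled_Wop k K g phi c : c <> 0 -> phi 0 <> 0 ->
  (forall t, 0 <= t <= 1 -> Wop K g t = c * phi t) ->
  forall t, 0 <= t <= 1 -> Rop k K g t = (phi t / phi 0) ^ k.
Proof.
  intros Hc Hphi HW t Ht; unfold Rop.
  rewrite !HW by (auto; lra).
  f_equal; field; auto.
Qed.

Section IntegralOperator.

Variable K : R -> R -> R.
Hypothesis hKc : cont01sq K.
Hypothesis hKpos : forall t u, 0 <= t <= 1 -> 0 <= u <= 1 -> 0 < K t u.

Lemma integrand_cont01 f t : cont01 f -> 0 <= t <= 1 -> cont01 (fun u => K t u * f u).
Proof. intros; apply cont01_mult; auto; apply cont01_section; auto. Qed.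

Lemma Wop_RInt f t : cont01 f -> 0 <= t <= 1 ->
  Wop K f t = RInt (fun u => K t u * f u) 0 1.
Proof. intros; apply Int01_RInt, cont01_ex_RInt, integrand_cont01; auto. Qed.

(* W maps continuous functions to continuous functions: by uniform continuity
   of K on the square, |Wf(t') - Wf(t)| <= sup|K(t',.) - K(t,.)| * sup|f|. *)
Lemma RInt_kernel_cont01 f : cont01 f ->
  cont01 (fun t => RInt (fun u => K t u * f u) 0 1).
Proof.
  intros Hf.
  destruct (continuity_ab_maj (fun x => Rabs (f (clamp x))) 0 1) as [xM [HM _]]; [lra| |].
  { intros c _; apply (continuity_pt_comp (fun x => f (clamp x)) Rabs).
    - apply cont01_clamp_pt; auto.
    - apply Rcontinuity_abs. }
  set (M := Rabs (f (clamp xM))) in *.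
  assert (HM0 : 0 <= M) by apply Rabs_pos.
  assert (HKunif : forall x y, continuity_2d_pt (fun u v => K (clamp u) (clamp v)) x y).
  { intros x y eps.
    destruct (hKc (clamp x) (clamp y) (clamp_in x) (clamp_in y) eps (cond_pos eps))
      as [d [Hd H]].
    exists (mkposreal d Hd); intros u v Hu Hv; simpl in *.
    apply H; try apply clamp_in; eapply Rle_lt_trans; try apply clamp_lip; auto. }
  intros t Ht eps He.
  assert (He' : 0 < eps / (M + 1)) by (apply Rdiv_lt_0_compat; lra).
  destruct (uniform_continuity_2d (fun u v => K (clamp u) (clamp v)) 0 1 0 1
     (fun x y _ _ => HKunif x y) (mkposreal _ He')) as [d Hd].
  exists d; split; [apply cond_pos|].
  intros t' Ht' Htt.
  assert (I1 : ex_RInt (fun u => K t' u * f u) 0 1)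
    by (apply cont01_ex_RInt, integrand_cont01; auto).
  assert (I2 : ex_RInt (fun u => K t u * f u) 0 1)
    by (apply cont01_ex_RInt, integrand_cont01; auto).
  pose proof (RInt_minus _ _ _ _ I1 I2) as Hdiff.
  change minus with Rminus in Hdiff; rewrite <- Hdiff.
  eapply Rle_lt_trans.
  { apply (abs_RInt_le_const _ 0 1 (eps / (M + 1) * M));
      [lra|exact (ex_RInt_minus _ _ _ _ I1 I2)|].
    intros u Hu; cbv beta.
    replace (K t' u * f u - K t u * f u) with ((K t' u - K t u) * f u) by ring.
    rewrite Rabs_mult; apply Rmult_le_compat; try apply Rabs_pos.
    - left; pose proof (Hd t u t' u Ht Hu Ht' Hu Htt) as Hx.
      rewrite !clamp_id in Hx by lra; apply Hx.
      rewrite Rminus_diag, Rabs_R0; apply cond_pos.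
    - pose proof (HM u Hu) as Hx; rewrite clamp_id in Hx by lra; exact Hx. }
  apply Rlt_le_trans with (eps / (M + 1) * (M + 1)); [|right; field; lra].
  rewrite Rminus_0_r, Rmult_1_l; apply Rmult_lt_compat_l; lra.
Qed.

Lemma Wop_cont01 f : cont01 f -> cont01 (Wop K f).
Proof.
  intros Hf; apply cont01_ext with (fun t => RInt (fun u => K t u * f u) 0 1).
  - intros; rewrite Wop_RInt; auto.
  - apply RInt_kernel_cont01; auto.
Qed.

Lemma Wop_scale f g c : cont01 f -> (forall u, 0 <= u <= 1 -> g u = c * f u) ->
  forall t, 0 <= t <= 1 -> Wop K g t = c * Wop K f t.
Proof.
  intros Hf Hg t Ht.
  assert (Hgc : cont01 g) by (apply cont01_ext with (fun u => c * f u);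
    [intros; rewrite Hg; auto|apply cont01_mult; [apply cont01_const|auto]]).
  rewrite !Wop_RInt by auto.
  rewrite <- (RInt_scal (V := R_CompleteNormedModule))
    by (apply cont01_ex_RInt, integrand_cont01; auto).
  apply RInt_ext; intros u Hu; rewrite Rmin_left, Rmax_right in Hu by lra.
  rewrite Hg by lra; change (K t u * (c * f u) = c * (K t u * f u)); ring.
Qed.

Lemma Wop_pos f t : C0plus f -> 0 <= t <= 1 -> 0 < Wop K f t.
Proof.
  intros Hf Ht; destruct (C0plus_pos_point f Hf) as [x [Hx Hfx]].
  destruct Hf as [[Hfc Hn] _].
  rewrite Wop_RInt by auto.
  apply RInt_pos01 with x; auto.
  - apply integrand_cont01; auto.
  - intros u Hu; apply Rmult_le_pos; [left; apply hKpos|apply Hn]; auto.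
  - apply Rmult_lt_0_compat; auto.
Qed.

Lemma Wop_C0plus f : C0plus f -> C0plus (Wop K f).
Proof.
  intros Hf; split; [split|].
  - apply Wop_cont01; apply Hf.
  - intros; left; apply Wop_pos; auto.
  - exists 0; split; [lra|]; apply Rgt_not_eq, Wop_pos; auto; lra.
Qed.

Lemma fixed_point_eigenfunction k f : C0plus f ->
  (forall t, 0 <= t <= 1 -> Rop k K f t = f t) ->
  forall t, 0 <= t <= 1 -> Hop k K (Wop K f) t = Wop K f 0 ^ k * Wop K f t.
Proof.
  intros Hf Hfix t Ht.
  assert (Hc : 0 < Wop K f 0) by (apply Wop_pos; auto; lra).
  rewrite Hop_Wop; apply Wop_scale; [apply Hf| |exact Ht].
  intros u Hu; rewrite <- (Hfix u Hu); unfold Rop, Rdiv.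
  rewrite Rpow_mult_distr, pow_inv; field; apply pow_nonzero; lra.
Qed.

(* (<=) For an eigenfunction f of H_k, the function (f/f(0))^k is a fixed
   point of R_k; f(0) > 0 because lam f(0) = W(f^k)(0) > 0. *)
Lemma eigenfunction_fixed_point k lam f : 0 < lam -> C0plus f ->
  (forall t, 0 <= t <= 1 -> Hop k K f t = lam * f t) ->
  0 < f 0 /\
  forall t, 0 <= t <= 1 ->
    Rop k K (fun u => (f u / f 0) ^ k) t = (f t / f 0) ^ k.
Proof.
  intros Hlam Hf Heig.
  assert (Hf0 : 0 < f 0).
  { assert (0 < lam * f 0)
      by (rewrite <- Heig, Hop_Wop by lra; apply Wop_pos; [apply C0plus_pow|]; auto; lra).
    destruct (Rle_or_lt (f 0) 0); auto; nra. }
  split; auto.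
  apply Rop_of_scaled_Wop with (c := / f 0 ^ k * lam).
  - apply Rmult_integral_contrapositive_currified; [|lra].
    apply Rinv_neq_0_compat, pow_nonzero; lra.
  - lra.
  - intros t Ht.
    rewrite Wop_scale with (f := fun u => f u ^ k) (c := / f 0 ^ k); auto.
    + rewrite <- Hop_Wop, Heig by auto; ring.
    + apply cont01_pow, Hf.
    + intros u _; unfold Rdiv; rewrite Rpow_mult_distr, pow_inv; ring.
Qed.

End IntegralOperator.

Theorem lemma2p1 (k : nat) (K : R -> R -> R)
  (hk : (2 <= k)%nat)
  (hKc : cont01sq K)
  (hKpos : forall t u, 0 <= t <= 1 -> 0 <= u <= 1 -> 0 < K t u) :
  (exists f : R -> R, C0plus f /\ forall t, 0 <= t <= 1 -> Rop k K f t = f t)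
  <->
  (exists (lam : R) (f : R -> R), 0 < lam /\ C0plus f /\
     forall t, 0 <= t <= 1 -> Hop k K f t = lam * f t).
Proof.
  split.
  - intros [f [Hf Hfix]].
    exists (Wop K f 0 ^ k), (Wop K f); split; [|split].
    + apply pow_lt, Wop_pos; auto; lra.
    + apply Wop_C0plus; auto.
    + apply fixed_point_eigenfunction; auto.
  - intros [lam [f [Hlam [Hf Heig]]]].
    destruct (eigenfunction_fixed_point K hKc hKpos k lam f Hlam Hf Heig) as [Hf0 Hfix].
    exists (fun u => (f u / f 0) ^ k); split; auto.
    apply C0plus_pow, C0plus_div; auto.
Qed.
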